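(* In the type $\mathbb A$ setting described in the context, for all $0\le i\le m-2$ we have $$x_{i+2}=x_1[i+1]\,x_{i+1}-x_i\qquad\text{and}\qquad x_{i+1}[1]=x_1[i+1]\,x_i[1]-x_{i-1}[1],$$ where $x_j=x_j[0]$.
   Context: Let $K$ be a field of characteristic $0$ or $K=\mathbb Z$, let $n\ge1$, $m=n+1$, $p=n$, and $\mathcal F=K(X_1,\dots,X_m)$. Let $B=(b_{ij})\in M_{m,n}(\mathbb Z)$ have $b_{i,i+1}=-1$ for $1\le i\le n-1$, $b_{i+1,i}=1$ for $1\le i\le n$, and all other entries $0$. Let $\mathbf x=(x_1,\dots,x_m)$ be algebraically independent over $K$ in $\mathcal F$. For $1\le k\le n$ the mutation $\mu_k(\mathbf y,C)=(\mathbf y',C')$ of a pair $(\mathbf y,C)$ is given by $c'_{ij}=-c_{ij}$ if $i=k$ or $j=k$, and $c'_{ij}=c_{ij}+\frac{|c_{ik}|c_{kj}+c_{ik}|c_{kj}|}{2}$ otherwise; $y'_s=y_s$ for $s\neq k$ and $y'_k=y_k^{-1}\big(\prod_{c_{ik}>0}y_i^{c_{ik}}+\prod_{c_{ik}<0}y_i^{-c_{ik}}\big)$. Set $(\mathbf x[0],B[0])=(\mathbf x,B)$ and, for $1\le i\le m-1$, $(\mathbf x[i],B[i])=\mu_{m-i}\cdots\mu_2\mu_1(\mathbf x[i-1],B[i-1])$ (apply $\mu_1$ first). Write $\mathbf x[i]=(x_1[i],\dots,x_m[i])$ and use the conventions $x_0[i]=1$, $x_{-1}[i]=0$ for all $i$.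 *)

From HB Require Import structures.
From mathcomp Require Import all_boot all_order all_algebra.
From mathcomp Require Import fraction.
From mathcomp Require Import mpoly.
Set Implicit Arguments. Unset Strict Implicit. Unset Printing Implicit Defensive.
Import Order.TTheory GRing.Theory Num.Theory.
Local Open Scope ring_scope.

(* Indices are 1-based natural numbers, as in the paper.  A "seed" is a pair
   (y, C) with y : nat -> F (only y_1..y_m matter) and C : nat -> nat -> int
   (only the entries c_ij, 1 <= i <= m, 1 <= j <= n matter). *)

Definition FracF (K : idomainType) (m : nat) := {fraction {mpoly K[m]}}.

Definition alg_indep (K : idomainType) (m : nat) (x : nat -> FracF K m) : Prop :=
  forall p : {mpoly K[m]},
    mmap (fun c : K => tofrac (c%:MP)) (fun i : 'I_m => x i.+1) p = 0 -> p = 0.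

Definition Bmat (n : nat) (i j : nat) : int :=
  if [&& j == i.+1, 1 <= i & i <= n.-1]%N then -1
  else if [&& i == j.+1, 1 <= j & j <= n]%N then 1
  else 0.

Definition mutC (k : nat) (C : nat -> nat -> int) : nat -> nat -> int :=
  fun i j =>
    if (i == k) || (j == k) then - C i j
    else C i j + ((`|C i k| * C k j + C i k * `|C k j|) %/ 2)%Z.

Definition mutY (F : fieldType) (m k : nat) (y : nat -> F) (C : nat -> nat -> int)
  : nat -> F :=
  fun s =>
    if s == k then
      (y k)^-1 * (\prod_(1 <= i < m.+1 | 0 < C i k) y i ^+ `|C i k|%N
                  + \prod_(1 <= i < m.+1 | C i k < 0) y i ^+ `|C i k|%N)
    else y s.

Definition mu (F : fieldType) (m k : nat)
  (s : (nat -> F) * (nat -> nat -> int)) : (nat -> F) * (nat -> nat -> int) :=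
  (mutY m k s.1 s.2, mutC k s.2).

(* (x[0],B[0]) = (x,B);
   (x[i],B[i]) = mu_{m-i} ... mu_2 mu_1 (x[i-1],B[i-1])  (mu_1 applied first). *)
Fixpoint seed (F : fieldType) (n : nat) (x : nat -> F) (i : nat)
  : (nat -> F) * (nat -> nat -> int) :=
  match i with
  | 0 => (x, Bmat n)
  | i'.+1 => foldl (fun s k => mu n.+1 k s) (seed n x i') (iota 1 (n.+1 - i'.+1))
  end.

Definition xc (F : fieldType) (n : nat) (x : nat -> F) (j : int) (i : nat) : F :=
  if j == -1 then 0
  else if j == 0 then 1
  else (seed n x i).1 `|j|%N.

Definition cor_stmt (K : idomainType) : Prop :=
  forall (n : nat), (1 <= n)%N ->
  forall x : nat -> FracF K n.+1, alg_indep x ->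
  forall i : nat, (i <= n.+1 - 2)%N ->
    xc n x (i%:Z + 2) 0 = xc n x 1 i.+1 * xc n x (i%:Z + 1) 0 - xc n x i%:Z 0 /\
    xc n x (i%:Z + 1) 1 = xc n x 1 i.+1 * xc n x i%:Z 1 - xc n x (i%:Z - 1) 1.

From HB Require Import structures.
From mathcomp Require Import all_boot all_order all_algebra.
From mathcomp Require Import fraction mpoly.
From mathcomp Require Import zify ring.
From Stdlib Require Import FunctionalExtensionality.
Set Implicit Arguments. Unset Strict Implicit. Unset Printing Implicit Defensive.
Import Order.TTheory GRing.Theory Num.Theory.
Local Open Scope ring_scope.

(* Every mutation in the sequence happens at a sink of the path quiver, so round
   [i] just replaces [x_j], for [j <= n - i], by
   [(x_{j-1}[i+1] x_{j+1}[i] + 1) / x_j[i]].  In the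
   triangular array [M a b = x_{b-a}[a]] (with [1] on the diagonal and [0] below
   it) these exchange relations say that all adjacent 2x2 minors equal 1, and
   such a frieze satisfies the three-term recurrence of the statement, by
   induction on [b - a].  The induction divides by entries of [M]; they are
   nonzero because every cluster variable is a subtraction-free expression in
   [x], hence its numerator and denominator take positive integer values at
   [(1, ..., 1)], which are nonzero in characteristic 0, and algebraic
   independence of [x] transfers this to the actual values. *)

(* Mutation at a sink [k] of the path quiver [1 - 2 - ... - n+1]; [k-1] is not
   a vertex when [k = 1]. *)
Definition exchange (F : fieldType) (y : nat -> F) (k : nat) : nat -> F :=
  fun j => if j == k then
    (y k)^-1 * ((if (1 < k)%N then y k.-1 else 1) * y k.+1 + 1) else y j.

Section PathMatrix.
Variable n : nat.

(* The exchange matrix of the path quiver whose edge [j - j+1] is oriented by the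
   sign [s j] (for [1 <= j <= n]); in particular [Bmat n = pathmx (fun=> 1)]. *)
Definition pathmx (s : nat -> int) (a b : nat) : int :=
  if (a == b.+1) && (1 <= b <= n)%N then s b
  else if [&& b == a.+1, (1 <= a)%N & (b <= n)%N] then - s a else 0.

Lemma eq_pathmx s s' : (forall b, (1 <= b <= n)%N -> s b = s' b) ->
  pathmx s = pathmx s'.
Proof.
move=> eq_s; apply: functional_extensionality => a.
apply: functional_extensionality => b; rewrite /pathmx.
case: ifP => [/andP[_ hb]|_]; first by rewrite eq_s.
by case: ifP => [/and3P[/eqP hb h1 h2]|_] //; rewrite eq_s //; lia.
Qed.

Lemma Bmat_pathmx : Bmat n = pathmx (fun=> 1).
Proof.
apply: functional_extensionality => a; apply: functional_extensionality => b.
rewrite /Bmat /pathmx; case: (eqVneq a b.+1) => [->|ne].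
  by have -> : (b == b.+2) = false by lia.
case: (eqVneq b a.+1) => [->|_] /=; last by case: ((1 <= a)%N && (a <= n.-1)%N).
case: (posnP a) => [->//|a_gt0].
by have -> : (a <= n.-1)%N = (a.+1 <= n)%N by lia.
Qed.

Section Sink.
Variables (s : nat -> int) (k : nat).
Hypotheses (s_pred : (1 < k)%N -> s k.-1 = -1) (s_k : s k = 1).

Lemma pathmx_sink_col_ge0 i : 0 <= pathmx s i k.
Proof.
rewrite /pathmx; case: ifP => [_|_]; first by rewrite s_k.
case: ifP => [/and3P[/eqP ek i_gt0 _]|_] //.
have -> : i = k.-1 by rewrite ek.
by rewrite s_pred // ek.
Qed.

Lemma pathmx_sink_row_le0 j : pathmx s k j <= 0.
Proof.
rewrite /pathmx; case: ifP => [/andP[/eqP ek /andP[j_gt0 _]]|_].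
  have -> : j = k.-1 by rewrite ek.
  by rewrite s_pred // ek.
by case: ifP => [_|_] //; rewrite s_k.
Qed.

(* Mutating at a sink only reverses the two edges at [k], since all products
   [c_ik c_kj] are nonpositive. *)
Lemma mutC_pathmx_sink : (1 <= k <= n)%N ->
  mutC k (pathmx s) =
  pathmx (fun j => if (j == k) || ((j == k.-1) && (1 < k)%N) then - s j else s j).
Proof.
move=> k_range; apply: functional_extensionality => a.
apply: functional_extensionality => b; rewrite /mutC.
case: (eqVneq a k) => [->|a_neq_k] /=.
  rewrite /pathmx; case: ifP => [/andP[/eqP ek b_range]|_].
    by have -> : (b == k) || (b == k.-1) && (1 < k)%N by lia.
  by case: ifP => [_|_] //; rewrite eqxx.
case: (eqVneq b k) => [->|b_neq_k] /=.
  rewrite /pathmx; case: ifP => [_|_]; first by rewrite eqxx.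
  case: ifP => [/and3P[/eqP ek a_gt0 _]|_] //.
  by have -> : (a == k) || (a == k.-1) && (1 < k)%N by lia.
have -> : `|pathmx s a k| * pathmx s k b + pathmx s a k * `|pathmx s k b| = 0.
  rewrite (ger0_norm (pathmx_sink_col_ge0 a)) (ler0_norm (pathmx_sink_row_le0 b)).
  by ring.
rewrite div0z addr0 /pathmx; case: ifP => [/andP[/eqP ea _]|_].
  by have -> : (b == k) || (b == k.-1) && (1 < k)%N = false by lia.
case: ifP => [/and3P[/eqP eb _ _]|_] //.
by have -> : (a == k) || (a == k.-1) && (1 < k)%N = false by lia.
Qed.

Lemma mutY_pathmx_sink (F : fieldType) (y : nat -> F) : (1 <= k <= n)%N ->
  mutY n.+1 k y (pathmx s) = exchange y k.
Proof.
move=> /andP[k_gt0 k_le_n]; apply: functional_extensionality => j.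
rewrite /mutY /exchange; case: (j == k) => //; congr (_ * (_ + _)).
  rewrite big_mkcond (@eq_big_nat _ _ _ _ _ _ (fun i => (if i == k.+1 then y i else 1)
      * (if (1 < k)%N && (i == k.-1) then y i else 1))); last first.
    move=> i _; rewrite /pathmx; case: (eqVneq i k.+1) => [->|_] /=.
      rewrite k_gt0 k_le_n s_k ltr01 expr1.
      have -> : (k.+1 == k.-1) = false by lia.
      by rewrite andbF mulr1.
    rewrite mul1r; case: (eqVneq k i.+1) => [ek|nk] /=.
      case: (posnP i) => [i0|i_gt0]; first by rewrite ek i0.
      rewrite k_le_n; move: s_pred; rewrite ek /= => -> //.
      by rewrite opprK ltr01 eqxx ltnS i_gt0 /= expr1.
    case: (eqVneq i k.-1) => [ei|_]; last by rewrite andbF.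
    by have -> : (1 < k)%N = false by lia.
  rewrite big_split -!big_mkcond /= big_nat1_eq big_nat1_cond_eq.
  have -> : (1 <= k.+1 < n.+2)%N by lia.
  case: (ltnP 1 k) => k_gt1; last by rewrite andbF mulr1 mul1r.
  have -> : (1 <= k.-1 < n.+2)%N by lia.
  by rewrite mulrC.
by rewrite big1 // => i; rewrite ltNge pathmx_sink_col_ge0.
Qed.

End Sink.
End PathMatrix.

Section Seed.
Variables (F : fieldType) (n : nat) (x : nat -> F).

Definition cluster (i : nat) : nat -> F := (seed n x i).1.

Definition seed_sign (i j : nat) : int := if (j < n.+1 - i)%N then 1 else -1.

(* The signs after the first [k] mutations [mu_1, ..., mu_k] of round [i]. *)
Definition round_sign (i k j : nat) : int :=
  if (j == k) && (0 < k)%N then - seed_sign i j else seed_sign i j.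

Definition round (i k : nat) :=
  foldl (fun s k => mu n.+1 k s) (seed n x i) (iota 1 k).

Fixpoint round_cluster (i k : nat) : nat -> F :=
  if k is k'.+1 then exchange (round_cluster i k') k else cluster i.

Lemma round_sink i k : (k < n - i)%N ->
  ((1 < k.+1)%N -> round_sign i k k.+1.-1 = -1) /\ round_sign i k k.+1 = 1.
Proof.
rewrite /round_sign /seed_sign => k_lt; split=> [k_gt0|].
  by rewrite /= eqxx ifT ?ifT //; lia.
by rewrite ifF ?ifT //; lia.
Qed.

Lemma round_eq i k : (k <= n - i)%N -> (seed n x i).2 = pathmx n (seed_sign i) ->
  round i k = (round_cluster i k, pathmx n (round_sign i k)).
Proof.
move=> + seed_i; elim: k => [_|k IH k_le].
  rewrite /round /= [seed n x i]surjective_pairing seed_i.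
  by congr pair; apply: eq_pathmx => b _; rewrite /round_sign andbF.
rewrite /round; have -> : iota 1 k.+1 = iota 1 k ++ [:: k.+1].
  by have := iotaD 1 k 1; rewrite addn1 add1n.
rewrite foldl_cat -/(round i k) IH; last by lia.
have [s_pred s_k] := round_sink (k_le : (k < n - i)%N).
have k_range : (1 <= k.+1 <= n)%N by lia.
rewrite /= /mu /= (mutY_pathmx_sink s_pred s_k _ k_range).
rewrite (mutC_pathmx_sink s_pred s_k k_range); congr pair.
apply: eq_pathmx => b _; rewrite /round_sign.
case: (eqVneq b k.+1) => [->|_] /=; first by have -> : (k.+1 == k) = false by lia.
case: (eqVneq b k) => [->|_] //=.
by rewrite ltnS; case: (posnP k) => [->|k_gt0] //=; rewrite opprK.
Qed.

Lemma seed_round i : seed n x i.+1 = round i (n - i).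
Proof. by rewrite /round /= subSS. Qed.

Lemma seed_pathmx i : (i <= n)%N -> (seed n x i).2 = pathmx n (seed_sign i).
Proof.
elim: i => [_|i IH i_le].
  by rewrite /= Bmat_pathmx; apply: eq_pathmx => b b_range; rewrite /seed_sign ifT //; lia.
rewrite seed_round round_eq //=; last by apply: IH; lia.
apply: eq_pathmx => b b_range; rewrite /round_sign /seed_sign.
case: (eqVneq b (n - i)%N) => [->|ne] /=.
  have -> : (0 < n - i)%N by lia.
  have -> : (n - i < n.+1 - i)%N by lia.
  by have -> : (n - i < n.+1 - i.+1)%N = false by lia.
by have -> : (b < n.+1 - i)%N = (b < n.+1 - i.+1)%N by lia.
Qed.

Lemma cluster_succ i : (i <= n)%N -> cluster i.+1 = round_cluster i (n - i).
Proof. by move=> i_le; rewrite /cluster seed_round round_eq // seed_pathmx. Qed.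

Lemma round_cluster_above i k j : (k < j)%N -> round_cluster i k j = cluster i j.
Proof.
elim: k => // k IH k_lt; rewrite /= /exchange ifF; last by lia.
by apply: IH; lia.
Qed.

Lemma round_cluster_done i k k' j : (j <= k <= k')%N ->
  round_cluster i k' j = round_cluster i k j.
Proof.
elim: k' => [|k' IH] /andP[j_le k_le]; first by have -> : k = 0%N by lia.
case: (eqVneq k k'.+1) => [->//|ne].
by rewrite /= /exchange ifF; [apply: IH; lia | lia].
Qed.

Lemma cluster_exchange i j : (i <= n)%N -> (1 <= j <= n - i)%N ->
  cluster i.+1 j =
  (cluster i j)^-1 * ((if (1 < j)%N then cluster i.+1 j.-1 else 1) * cluster i j.+1 + 1).
Proof.
move=> i_le /andP[j_gt0 j_le]; rewrite cluster_succ //.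
have settled l : (l <= j)%N -> round_cluster i (n - i) l = round_cluster i j l.
  by move=> l_le; apply: round_cluster_done; lia.
rewrite !settled ?leq_pred //.
case: j j_gt0 j_le {settled} => // j _ j_lt.
rewrite /= /exchange eqxx (ltn_eqF (ltnSn j)).
by rewrite (@round_cluster_above i j j.+1) ?(@round_cluster_above i j j.+2).
Qed.

Lemma cluster_stable i j : (i <= n)%N -> (n - i < j)%N -> cluster i.+1 j = cluster i j.
Proof. by move=> i_le j_gt; rewrite cluster_succ // round_cluster_above. Qed.

End Seed.

Section SubtractionFree.
Variables (K : idomainType) (m : nat).
Hypothesis K_char0 : forall k : nat, k.+1%:R != 0 :> K.
Variable x : nat -> FracF K m.
Hypothesis x_indep : alg_indep x.

Definition const_frac : {rmorphism K -> FracF K m} :=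
  ((@tofrac _) \o (@mpolyC m K))%FUN.

Definition eval_x (P : {mpoly K[m]}) : FracF K m :=
  mmap const_frac (fun i : 'I_m => x i.+1) P.

Definition positive_at_ones (P : {mpoly K[m]}) : Prop :=
  exists k : nat, meval (fun=> 1) P = k.+1%:R.

Definition subtraction_free (y : FracF K m) : Prop :=
  exists P Q, [/\ positive_at_ones P, positive_at_ones Q & y = eval_x P / eval_x Q].

Lemma positive_at_ones1 : positive_at_ones 1.
Proof. by exists 0%N; rewrite meval1. Qed.

Lemma positive_at_onesD P Q :
  positive_at_ones P -> positive_at_ones Q -> positive_at_ones (P + Q).
Proof.
by case=> a Pa [b Qb]; exists (a + b).+1; rewrite mevalD Pa Qb -natrD addnS addSn.
Qed.

Lemma positive_at_onesM P Q :
  positive_at_ones P -> positive_at_ones Q -> positive_at_ones (P * Q).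
Proof.
case=> a Pa [b Qb]; exists (a * b + a + b)%N; rewrite mevalM Pa Qb -natrM.
by congr (_%:R); lia.
Qed.

Lemma eval_x_neq0 P : positive_at_ones P -> eval_x P != 0.
Proof.
case=> a Pa; apply/eqP => /x_indep P0.
by move: Pa; rewrite P0 meval0 => /esym/eqP; rewrite (negbTE (K_char0 a)).
Qed.

Lemma subtraction_free_neq0 y : subtraction_free y -> y != 0.
Proof. by case=> P [Q [P_pos Q_pos ->]]; rewrite mulf_neq0 ?invr_eq0 ?eval_x_neq0. Qed.

Lemma subtraction_free1 : subtraction_free 1.
Proof.
exists 1, 1; split; try exact: positive_at_ones1.
by rewrite /eval_x rmorph1 divr1.
Qed.

Lemma subtraction_freeD y z :
  subtraction_free y -> subtraction_free z -> subtraction_free (y + z).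
Proof.
case=> [P1 [Q1 [P1_pos Q1_pos ->]]] [P2 [Q2 [P2_pos Q2_pos ->]]].
exists (P1 * Q2 + P2 * Q1), (Q1 * Q2); split.
- by apply: positive_at_onesD; apply: positive_at_onesM.
- exact: positive_at_onesM.
by rewrite addf_div ?eval_x_neq0 // /eval_x rmorphD !rmorphM.
Qed.

Lemma subtraction_freeM y z :
  subtraction_free y -> subtraction_free z -> subtraction_free (y * z).
Proof.
case=> [P1 [Q1 [P1_pos Q1_pos ->]]] [P2 [Q2 [P2_pos Q2_pos ->]]].
exists (P1 * P2), (Q1 * Q2); split; try exact: positive_at_onesM.
by rewrite mulf_div /eval_x !rmorphM.
Qed.

Lemma subtraction_freeV y : subtraction_free y -> subtraction_free y^-1.
Proof. by case=> P [Q [P_pos Q_pos ->]]; exists Q, P; rewrite invf_div. Qed.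

Lemma subtraction_free_x j : (1 <= j <= m)%N -> subtraction_free (x j).
Proof.
move=> j_range; have j_lt : (j.-1 < m)%N by lia.
exists 'X_(Ordinal j_lt), 1; split.
- by exists 0%N; rewrite mevalXU.
- exact: positive_at_ones1.
by rewrite /eval_x rmorph1 divr1 mmapX mmap1U /= prednK //; case/andP: j_range.
Qed.

End SubtractionFree.

Section FriezeRecurrence.
Variables (F : fieldType) (N : nat) (M : nat -> nat -> F).
Hypotheses (M_diag : forall a, M a a = 1) (M_subdiag : forall a, M a.+1 a = 0).
Hypothesis M_unimodular : forall a b, (a <= b <= N)%N ->
  M a b * M a.+1 b.+1 - M a.+1 b * M a b.+1 = 1.
Hypothesis M_neq0 : forall a b, (a <= b <= N)%N -> M a b != 0.

Lemma frieze_recurrence a e : (a <= e.+1 <= N)%N ->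
  M a e.+2 = M e.+1 e.+2 * M a e.+1 - M a e.
Proof.
move=> /andP[a_le e_lt]; move def_d: (e.+1 - a)%N => d.
elim: d a def_d a_le => [|d IH] a def_d a_le.
  have -> : a = e.+1 by lia.
  by rewrite M_diag M_subdiag mulr1 subr0.
have IHa := IH a.+1 ltac:(lia) ltac:(lia).
have Ma_neq0 : M a.+1 e.+1 != 0 by apply: M_neq0; lia.
(* Expanding the unimodular minors at [(a, e)] and [(a, e+1)] reduces the
   recurrence for [a] to the recurrence for [a+1]. *)
have expand : M a.+1 e.+1 * (M a e.+2 - (M e.+1 e.+2 * M a e.+1 - M a e)) =
  (M a e * M a.+1 e.+1 - M a.+1 e * M a e.+1)
  - (M a e.+1 * M a.+1 e.+2 - M a.+1 e.+1 * M a e.+2)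
  + M a e.+1 * (M a.+1 e.+2 - (M e.+1 e.+2 * M a.+1 e.+1 - M a.+1 e)) by ring.
move: expand; rewrite !M_unimodular; try lia.
rewrite -IHa !subrr mulr0 addr0.
by move/eqP; rewrite mulf_eq0 (negbTE Ma_neq0) subr_eq0 => /eqP.
Qed.

End FriezeRecurrence.

(* The array [x_{b-a}[a]], with the conventions [x_0 = 1] and [x_{-1} = 0]
   placed on the diagonal and the subdiagonal. *)
Definition cluster_frieze (F : fieldType) n (x : nat -> F) (a b : nat) : F :=
  if (b < a)%N then 0 else if b == a then 1 else cluster n x a (b - a).

Lemma cluster_friezeE (F : fieldType) n (x : nat -> F) a d :
  cluster_frieze n x a (a + d) = if d == 0%N then 1 else cluster n x a d.
Proof.
rewrite /cluster_frieze ltnNge leq_addr /= -{2}[a]addn0 eqn_add2l.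
by case: eqP => // _; rewrite addKn.
Qed.

Lemma cluster_friezeSE (F : fieldType) n (x : nat -> F) a d :
  cluster_frieze n x a.+1 (a + d.+1) = if d == 0%N then 1 else cluster n x a.+1 d.
Proof. by rewrite -addSnnS cluster_friezeE. Qed.

Lemma xc_cluster_frieze (F : fieldType) n (x : nat -> F) a d :
  xc n x d%:Z a = cluster_frieze n x a (a + d).
Proof. by rewrite cluster_friezeE /xc; case: d. Qed.

Lemma xc_pred_cluster_frieze (F : fieldType) n (x : nat -> F) a d :
  xc n x (d%:Z - 1) a.+1 = cluster_frieze n x a.+1 (a + d).
Proof.
case: d => [|d]; first by rewrite /cluster_frieze addn0 ltnSn.
have -> : d.+1%:Z - 1 = d%:Z by rewrite -addn1 PoszD addrK.
by rewrite xc_cluster_frieze addSnnS.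
Qed.

Section ClusterFrieze.
Variables (K : idomainType) (n : nat).
Hypothesis K_char0 : forall k : nat, k.+1%:R != 0 :> K.
Variable x : nat -> FracF K n.+1.
Hypothesis x_indep : alg_indep x.

Lemma cluster_subtraction_free i j :
  (i <= n)%N -> (1 <= j <= n.+1)%N -> subtraction_free x (cluster n x i j).
Proof.
elim: i j => [|i IH] j i_le j_range; first exact: subtraction_free_x.
elim: j j_range => [|j IHj] j_range; first by lia.
have [j_le|j_gt] := leqP j.+1 (n - i); last by rewrite cluster_stable; [apply: IH | ..]; lia.
rewrite cluster_exchange //; last by lia.
apply/subtraction_freeM; first by apply/subtraction_freeV/IH; lia.
apply: (subtraction_freeD K_char0 x_indep); last exact: subtraction_free1.
apply/subtraction_freeM; last by apply: IH; lia.
by case: ltnP => [j_gt0|_]; [apply: IHj; lia | exact: subtraction_free1].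
Qed.

Lemma cluster_neq0 i j : (i <= n)%N -> (1 <= j <= n.+1)%N -> cluster n x i j != 0.
Proof.
by move=> i_le j_range; apply: (subtraction_free_neq0 K_char0 x_indep);
  apply: cluster_subtraction_free.
Qed.

Local Notation M := (cluster_frieze n x).

Lemma cluster_frieze_unimodular a b : (a <= b <= n)%N ->
  M a b * M a.+1 b.+1 - M a.+1 b * M a b.+1 = 1.
Proof.
move=> /andP[a_le b_le]; rewrite -(subnKC a_le) in b_le *.
case: (b - a)%N b_le => [|d] d_le.
  by rewrite addn0 /cluster_frieze !ltnn ltnSn !eqxx mul1r mul0r subr0.
have c_neq0 : cluster n x a d.+1 != 0 by apply: cluster_neq0; lia.
rewrite -addnS !cluster_friezeSE !cluster_friezeE /=.
rewrite (@cluster_exchange _ n x a d.+1); [|lia..].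
rewrite mulrA mulfV // mul1r addrAC.
by case: d d_le c_neq0 => [|d] _ _ /=; rewrite subrr add0r.
Qed.

Lemma cluster_frieze_neq0 a b : (a <= b <= n)%N -> M a b != 0.
Proof.
move=> /andP[a_le b_le]; rewrite -(subnKC a_le) in b_le *.
rewrite cluster_friezeE; case: (b - a)%N b_le => [|d] d_le /=.
  exact: oner_neq0.
by apply: cluster_neq0; lia.
Qed.

Lemma cluster_frieze_recurrence a e : (a <= e.+1 <= n)%N ->
  M a e.+2 = M e.+1 e.+2 * M a e.+1 - M a e.
Proof.
apply: frieze_recurrence; last exact: cluster_frieze_neq0.
- by move=> c; rewrite /cluster_frieze ltnn eqxx.
- by move=> c; rewrite /cluster_frieze ltnSn.
- exact: cluster_frieze_unimodular.
Qed.

End ClusterFrieze.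

Lemma cor_stmt_char0 (K : idomainType) :
  (forall k : nat, k.+1%:R != 0 :> K) -> cor_stmt K.
Proof.
move=> K_char0 n n_gt0 x x_indep i i_le.
have frieze := cluster_frieze_recurrence K_char0 x_indep.
rewrite -!PoszD !addn1 !addn2 xc_pred_cluster_frieze.
rewrite -[1]/(1%N%:Z) !xc_cluster_frieze !add0n !add1n addn1.
by split; apply: frieze; lia.
Qed.

Theorem corollary7p2 :
  (forall K : fieldType, [pchar K]%R =i pred0 -> cor_stmt K) /\ cor_stmt int.
Proof.
split; last by apply: cor_stmt_char0 => k; rewrite pnatr_eq0.
by move=> K /pcharf0P K_char0; apply: cor_stmt_char0 => k; rewrite K_char0.
Qed.
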